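(* The class $\{X\in 2^\omega: X \text{ is recursively traceable}\}$ has Hausdorff dimension $0$.
   Context: Fix a recursive canonical enumeration $n\mapsto D_n$ of all finite subsets of $\omega$ (with each $D_n$ uniformly recursive). A set $A\in 2^\omega$ is recursively traceable if there is a computable function $b$ (a bound) such that for every function $f\le_T A$ there is a computable function $g$ with $|D_{g(n)}|\le b(n)$ and $f(n)\in D_{g(n)}$ for all $n\in\omega$. Hausdorff dimension is the classical Hausdorff dimension on Cantor space. *)

From HB Require Import structures.
From mathcomp Require Import all_boot all_order all_algebra.
From mathcomp Require Import all_classical all_reals all_analysis.
Set Implicit Arguments. Unset Strict Implicit. Unset Printing Implicit Defensive.
Import Order.TTheory GRing.Theory Num.Theory.

(* Oracle partial recursive functions (mu-recursive functions with an  *)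
(* oracle primitive).  Programs are untyped; a program of the wrong    *)
(* arity still denotes a partial recursive function (missing arguments *)
(* default to 0), so the class of functions is the standard one.       *)
Inductive prog : Type :=
| PZero : prog
| PSucc : prog
| PProj : nat -> prog
| POrac : prog
| PComp : prog -> seq prog -> prog
| PPrec : prog -> prog -> prog
| PMu   : prog -> prog.

Inductive eval (A : nat -> bool) : prog -> seq nat -> nat -> Prop :=
| evZero xs : eval A PZero xs 0
| evSucc xs : eval A PSucc xs (head 0%N xs).+1
| evProj i xs : eval A (PProj i) xs (nth 0%N xs i)
| evOrac xs : eval A POrac xs (nat_of_bool (A (head 0%N xs)))
| evComp f gs xs ys y :
    evals A gs xs ys -> eval A f ys y -> eval A (PComp f gs) xs y
| evPrec0 f g xs y : eval A f xs y -> eval A (PPrec f g) (0%N :: xs) y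
| evPrecS f g n xs z y :
    eval A (PPrec f g) (n :: xs) z -> eval A g (n :: z :: xs) y ->
    eval A (PPrec f g) (n.+1 :: xs) y
| evMu f xs y :
    eval A f (y :: xs) 0 ->
    (forall z, (z < y)%N -> exists2 v, v <> 0%N & eval A f (z :: xs) v) ->
    eval A (PMu f) xs y
with evals (A : nat -> bool) : seq prog -> seq nat -> seq nat -> Prop :=
| evsNil xs : evals A [::] xs [::]
| evsCons g gs xs y ys :
    eval A g xs y -> evals A gs xs ys -> evals A (g :: gs) xs (y :: ys).

Definition computes (A : nat -> bool) (p : prog) (f : nat -> nat) : Prop :=
  forall n, eval A p [:: n] (f n).

Definition turing_le (f : nat -> nat) (A : nat -> bool) : Prop :=
  exists p, computes A p f.

Definition computable (f : nat -> nat) : Prop :=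
  exists p, computes (fun _ => false) p f.

(* Canonical enumeration of finite sets: D_k = { i | bit i of k is 1 } *)
Definition D (k : nat) : seq nat := [seq i <- iota 0 k | odd (k %/ 2 ^ i)].

Definition recursively_traceable (A : nat -> bool) : Prop :=
  exists b, computable b /\
    forall f, turing_le f A ->
      exists g, computable g /\
        forall n, (size (D (g n)) <= b n)%N /\ f n \in D (g n).

(* Hausdorff dimension on Cantor space 2^omega (standard metric        *)
(* d(X,Y) = 2^{-min{i | X i <> Y i}}), via covers by basic cylinders.  *)
Local Open Scope classical_set_scope.
Local Open Scope ring_scope.

Definition cylinder (s : seq bool) : set (nat -> bool) :=
  [set X | forall i, (i < size s)%N -> X i = nth false s i].

Definition covers (E : set (nat -> bool)) (U : nat -> option (seq bool)) :=
  E `<=` \bigcup_i (if U i is Some s then cylinder s else set0).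

Definition cover_weight (R : realType) (t : R) (u : option (seq bool)) : \bar R :=
  if u is Some s then (powR (2 : R) (- (t * (size s)%:R)))%:E else 0%E.

(* H^t_n(E): infimum over covers by cylinders of length >= n (diam <= 2^-n) *)
Definition hausdorff_approx (R : realType) (t : R) (n : nat)
    (E : set (nat -> bool)) : \bar R :=
  ereal_inf [set (\sum_(i <oo) cover_weight t (U i))%E | U in
     [set U | covers E U /\
        forall i s, U i = Some s -> (n <= size s)%N]].

(* H^t(E) = lim_{n -> oo} H^t_n(E) = sup_n H^t_n(E) (nondecreasing in n) *)
Definition hausdorff_measure (R : realType) (t : R) (E : set (nat -> bool))
  : \bar R := ereal_sup (range (fun n => hausdorff_approx t n E)).

Definition hausdorff_dim (R : realType) (E : set (nat -> bool)) : \bar R :=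
  ereal_inf [set t%:E | t in [set t : R | 0 <= t /\ hausdorff_measure t E = 0%E]].

(* Fix t = 1/(q+1).  If X is recursively traceable with bound b, the prefix of X of
   length h(n) = n (b(n)+1)^2 is computable from X as a function of n, so a computable g
   lists at each n at most b(n) candidates for it.  Enumerate the pairs (b, g) of programs
   and give the j-th pair the b(n_j) candidate cylinders of length h(n_j), at a level n_j
   growing like (q+1) j^2.  These cylinders cover every recursively traceable X, and the
   k-th cylinder of the j-th pair, whose index in the cover is i = (j+k)^2 + k, has length
   at least (q+1)(c+i+1), because i+1 <= (j+1)^2 (b(n_j)+1)^2.  Its t-weight is therefore
   at most 2^-c 2^-(i+1), so H^t <= 2^-c for every c, H^t = 0, and the dimension is 0. *)

From HB Require Import structures.
From Pilot Require Import Defs.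
From mathcomp Require Import all_boot all_order all_algebra.
From mathcomp Require Import all_classical all_reals all_analysis.
From mathcomp Require Import zify.
Set Implicit Arguments. Unset Strict Implicit. Unset Printing Implicit Defensive.
Import Order.TTheory GRing.Theory Num.Theory.

Local Notation eval := Defs.eval.
Local Notation evals := Defs.evals.

Section Evaluation.

Variable A : nat -> bool.

(* The generated scheme gives no induction hypothesis for the evaluations
   under the existential quantifier of [evMu]. *)
Definition eval_nested_ind
  (P : prog -> seq nat -> nat -> Prop) (Q : seq prog -> seq nat -> seq nat -> Prop)
  (HZ : forall xs, P PZero xs 0)
  (HS : forall xs, P PSucc xs (head 0%N xs).+1)
  (HP : forall i xs, P (PProj i) xs (nth 0%N xs i))
  (HO : forall xs, P POrac xs (A (head 0%N xs)))
  (HC : forall f gs xs ys y, evals A gs xs ys -> Q gs xs ys ->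
      eval A f ys y -> P f ys y -> P (PComp f gs) xs y)
  (HP0 : forall f g xs y, eval A f xs y -> P f xs y -> P (PPrec f g) (0%N :: xs) y)
  (HPS : forall f g n xs z y,
      eval A (PPrec f g) (n :: xs) z -> P (PPrec f g) (n :: xs) z ->
      eval A g (n :: z :: xs) y -> P g (n :: z :: xs) y -> P (PPrec f g) (n.+1 :: xs) y)
  (HM : forall f xs y, eval A f (y :: xs) 0 -> P f (y :: xs) 0 ->
      (forall z, (z < y)%N ->
         exists2 v, v <> 0%N & eval A f (z :: xs) v /\ P f (z :: xs) v) ->
      P (PMu f) xs y)
  (HN : forall xs, Q [::] xs [::])
  (HCo : forall g gs xs y ys, eval A g xs y -> P g xs y ->
      evals A gs xs ys -> Q gs xs ys -> Q (g :: gs) xs (y :: ys)) :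
  forall p xs y, eval A p xs y -> P p xs y :=
  fix F p xs y (e : eval A p xs y) {struct e} : P p xs y :=
    match e in eval _ p xs y return P p xs y with
    | evZero xs => HZ xs
    | evSucc xs => HS xs
    | evProj i xs => HP i xs
    | evOrac xs => HO xs
    | evComp f gs xs ys y es ef => HC f gs xs ys y es (G _ _ _ es) ef (F _ _ _ ef)
    | evPrec0 f g xs y ef => HP0 f g xs y ef (F _ _ _ ef)
    | evPrecS f g n xs z y e1 e2 =>
        HPS f g n xs z y e1 (F _ _ _ e1) e2 (F _ _ _ e2)
    | evMu f xs y e0 H => HM f xs y e0 (F _ _ _ e0) (fun z hz =>
        let: ex_intro2 v hv ev := H z hz in ex_intro2 _ _ v hv (conj ev (F _ _ _ ev)))
    end
  with G gs xs ys (e : evals A gs xs ys) {struct e} : Q gs xs ys :=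
    match e in evals _ gs xs ys return Q gs xs ys with
    | evsNil xs => HN xs
    | evsCons g gs xs y ys e1 e2 =>
        HCo g gs xs y ys e1 (F _ _ _ e1) e2 (G _ _ _ e2)
    end
  for F.

Lemma eval_det p xs y y' : eval A p xs y -> eval A p xs y' -> y = y'.
Proof.
move=> e; move: e y'; apply: (@eval_nested_ind
  (fun p xs y => forall y', eval A p xs y' -> y = y')
  (fun gs xs ys => forall ys', evals A gs xs ys' -> ys = ys')).
- by move=> ? ? e; inversion e.
- by move=> ? ? e; inversion e.
- by move=> ? ? ? e; inversion e.
- by move=> ? ? e; inversion e.
- move=> f gs xs0 ys y0 _ IHs _ IHf y' e.
  inversion e as [| | | |f' gs' xs' ys' y'' es ef| | | ]; subst.
  by apply: IHf; rewrite (IHs _ es).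
- by move=> f g xs0 y0 _ IHf y' e; inversion e; subst; exact: IHf.
- move=> f g n xs0 z y0 _ IH1 _ IH2 y' e.
  inversion e as [| | | | | |f' g' n' xs' z' y'' e1 e2| ]; subst.
  by apply: IH2; rewrite (IH1 _ e1).
- move=> f xs0 y0 _ IH0 Hlt y' e.
  inversion e as [| | | | | | |f' xs' y'' e0 Hlt']; subst.
  case: (ltngtP y0 y') => // lt_y.
  + by have [v v_neq0 /IH0 /esym] := Hlt' _ lt_y.
  + by have [v v_neq0 [_ /(_ _ e0)]] := Hlt _ lt_y.
- by move=> ? ? e; inversion e.
- move=> g gs xs0 y0 ys _ IHg _ IHs ys' e.
  inversion e as [|g' gs' xs' y'' ys'' eg es]; subst.
  by rewrite (IHg _ eg) (IHs _ es).
Qed.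

End Evaluation.

Fixpoint strip_oracle (p : prog) : prog :=
  match p with
  | POrac => PZero
  | PComp f gs => PComp (strip_oracle f) (map strip_oracle gs)
  | PPrec f g => PPrec (strip_oracle f) (strip_oracle g)
  | PMu f => PMu (strip_oracle f)
  | q => q
  end.

Lemma eval_strip_oracle A p xs y :
  eval (fun=> false) p xs y -> eval A (strip_oracle p) xs y.
Proof.
move: p xs y; apply: (@eval_nested_ind _ (fun p xs y => eval A (strip_oracle p) xs y)
  (fun gs xs ys => evals A (map strip_oracle gs) xs ys)) => /=.
- by move=> ?; constructor.
- by move=> ?; constructor.
- by move=> ? ?; constructor.
- by move=> ?; constructor.
- by move=> f gs xs ys y _ IHs _ IHf; apply: evComp IHs IHf.
- by move=> f g xs y _ IHf; constructor.
- by move=> f g n xs z y _ IH1 _ IH2; apply: evPrecS IH1 IH2.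
- move=> f xs y _ IH0 Hlt; constructor => // z lt_zy.
  by have [v v_neq0 [_ ev]] := Hlt _ lt_zy; exists v.
- by move=> ?; constructor.
- by move=> g gs xs y ys _ IHg _ IHs; constructor.
Qed.

Definition add_prog := PPrec (PProj 0) (PComp PSucc [:: PProj 1]).
Definition mul_prog := PPrec PZero (PComp add_prog [:: PProj 2; PProj 1]).

Lemma eval_add_prog A m n : eval A add_prog [:: m; n] (m + n).
Proof.
elim: m => [|m IHm]; first exact: (evPrec0 _ (evProj A 0 [:: n])).
apply: (evPrecS IHm); apply: (@evComp _ _ _ _ [:: m + n]).
  exact: evsCons (evProj A 1 [:: m; m + n; n]) (evsNil _ _).
exact: (evSucc A [:: m + n]).
Qed.

Lemma eval_mul_prog A m n : eval A mul_prog [:: m; n] (m * n).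
Proof.
elim: m => [|m IHm]; first exact: (evPrec0 _ (evZero _ _)).
apply: (evPrecS IHm); rewrite mulSn.
apply: (@evComp _ _ _ _ [:: n; m * n]); last exact: eval_add_prog.
apply: evsCons (evProj A 2 [:: m; m * n; n]) _.
exact: evsCons (evProj A 1 [:: m; m * n; n]) (evsNil _ _).
Qed.

Section TuringReducibility.

Variable A : nat -> bool.

Lemma computable_turing_le f : computable f -> turing_le f A.
Proof. by case=> p pf; exists (strip_oracle p) => n; apply: eval_strip_oracle. Qed.

Lemma turing_le_id : turing_le id A.
Proof. by exists (PProj 0) => n; apply: (evProj A 0 [:: n]). Qed.

Lemma turing_le_comp f g : turing_le f A -> turing_le g A -> turing_le (g \o f) A.
Proof.
case=> pf pfP [pg pgP]; exists (PComp pg [:: pf]) => n.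
exact: evComp (evsCons (pfP n) (evsNil _ _)) (pgP (f n)).
Qed.

Lemma turing_le_succ f : turing_le f A -> turing_le (succn \o f) A.
Proof. by move/turing_le_comp; apply; exists PSucc => n; apply: (evSucc A [:: n]). Qed.

Lemma turing_le_mul f g :
  turing_le f A -> turing_le g A -> turing_le (fun n => f n * g n) A.
Proof.
case=> pf pfP [pg pgP]; exists (PComp mul_prog [:: pf; pg]) => n.
apply: evComp (evsCons (pfP n) (evsCons (pgP n) (evsNil _ _))) _.
exact: eval_mul_prog.
Qed.

End TuringReducibility.

Fixpoint prefix_code (X : nat -> bool) (k : nat) : nat :=
  if k is k'.+1 then (prefix_code X k').*2 + X k' else 0.

Definition prefix_code_prog :=
  PPrec PZero (PComp add_prog [:: PProj 1; PComp add_prog [:: PProj 1; POrac]]).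

Lemma turing_le_prefix_code A : turing_le (prefix_code A) A.
Proof.
exists prefix_code_prog; elim=> [|k IHk]; first exact: (evPrec0 _ (evZero _ _)).
apply: (evPrecS IHk); rewrite /= -addnn -addnA.
set z := prefix_code A k; set args := [:: k; z].
apply: (@evComp _ _ _ _ [:: z; z + A k]); last exact: eval_add_prog.
apply: evsCons (evProj A 1 args) (evsCons _ (evsNil _ _)).
apply: (@evComp _ _ _ _ [:: z; nat_of_bool (A k)]); last exact: eval_add_prog.
exact: evsCons (evProj A 1 args) (evsCons (evOrac A args) (evsNil _ _)).
Qed.

Lemma prefix_codeD X m j :
  prefix_code X (m + j) = prefix_code X m * 2 ^ j + prefix_code (fun i => X (m + i)) j.
Proof. by elim: j => [|j IHj]; rewrite ?addn0 ?muln1 // addnS /= IHj expnS; lia. Qed.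

Lemma prefix_code_lt X k : prefix_code X k < 2 ^ k.
Proof. by elim: k => [|k IHk] //=; rewrite expnS; case: (X k) => /=; lia. Qed.

(* The last [h] big-endian binary digits of [c]. *)
Definition bits_of (c h : nat) : seq bool :=
  [seq odd (c %/ 2 ^ (h.-1 - i)) | i <- iota 0 h].

Lemma size_bits_of c h : size (bits_of c h) = h.
Proof. by rewrite size_map size_iota. Qed.

Lemma cylinder_prefix_code X h : cylinder (bits_of (prefix_code X h) h) X.
Proof.
move=> i; rewrite size_bits_of => lt_ih.
rewrite (nth_map 0%N) ?size_iota // nth_iota // add0n.
have [j ->] : exists j, h = i.+1 + j by exists (h - i.+1); lia.
have -> : (i.+1 + j).-1 - i = j by lia.
rewrite prefix_codeD divnMDl ?expn_gt0 // divn_small ?prefix_code_lt // addn0 /=.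
by rewrite oddD odd_double oddb.
Qed.

Fixpoint all_prop (P : prog -> Prop) (gs : seq prog) : Prop :=
  if gs is g :: gs' then P g /\ all_prop P gs' else True.

(* [prog_ind] gives no induction hypothesis for the arguments of [PComp]. *)
Definition prog_nested_ind (P : prog -> Prop)
  (HZ : P PZero) (HS : P PSucc) (HP : forall i, P (PProj i)) (HO : P POrac)
  (HC : forall f gs, P f -> all_prop P gs -> P (PComp f gs))
  (HR : forall f g, P f -> P g -> P (PPrec f g))
  (HM : forall f, P f -> P (PMu f)) : forall p, P p :=
  fix F p := match p return P p with
  | PZero => HZ | PSucc => HS | PProj i => HP i | POrac => HO
  | PComp f gs => HC f gs (F f)
      ((fix G gs : all_prop P gs := match gs return all_prop P gs with
         | [::] => I | g :: gs' => conj (F g) (G gs') end) gs)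
  | PPrec f g => HR f g (F f) (F g)
  | PMu f => HM f (F f)
  end.

Fixpoint tree_of_prog (p : prog) : GenTree.tree nat :=
  match p with
  | PZero => GenTree.Node 0 [::]
  | PSucc => GenTree.Node 1 [::]
  | PProj i => GenTree.Leaf i
  | POrac => GenTree.Node 3 [::]
  | PComp f gs => GenTree.Node 4 (tree_of_prog f :: map tree_of_prog gs)
  | PPrec f g => GenTree.Node 5 [:: tree_of_prog f; tree_of_prog g]
  | PMu f => GenTree.Node 6 [:: tree_of_prog f]
  end.

Fixpoint prog_of_tree (t : GenTree.tree nat) : prog :=
  match t with
  | GenTree.Leaf i => PProj i
  | GenTree.Node 1 _ => PSucc
  | GenTree.Node 3 _ => POrac
  | GenTree.Node 4 (t1 :: ts) => PComp (prog_of_tree t1) (map prog_of_tree ts)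
  | GenTree.Node 5 [:: t1; t2] => PPrec (prog_of_tree t1) (prog_of_tree t2)
  | GenTree.Node 6 [:: t1] => PMu (prog_of_tree t1)
  | _ => PZero
  end.

Lemma tree_of_progK : cancel tree_of_prog prog_of_tree.
Proof.
elim/prog_nested_ind => //= [f gs -> IHgs|f g -> ->|f ->] //; congr PComp.
by elim: gs IHgs => //= g gs IHgs [-> /IHgs ->].
Qed.

HB.instance Definition _ := Countable.copy prog (can_type tree_of_progK).

(* Junk value [point] when [p] computes no total function. *)
Definition fun_of_prog (p : prog) : nat -> nat :=
  [get f | computes (fun=> false) p f].

Lemma fun_of_progE p f : computes (fun=> false) p f -> fun_of_prog p = f.
Proof.
move=> pf; apply: get_unique => [|g pg]; first exact: pf.
by apply/funext => n; apply: eval_det (pg n) (pf n).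
Qed.

Definition pair_code (j k : nat) : nat := (j + k) ^ 2 + k.

Lemma pair_code_inj j k j' k' : pair_code j k = pair_code j' k' -> j = j' /\ k = k'.
Proof.
rewrite /pair_code => E.
suff sum_eq : j + k = j' + k' by rewrite sum_eq in E; lia.
by move: E; rewrite -!mulnn; case: (ltngtP (j + k) (j' + k')) => // lt_sum; nia.
Qed.

Lemma pair_code_lt j k m : k < m -> (pair_code j k).+1 <= (j.+1 * m) ^ 2.
Proof.
move=> lt_km; have le_sum : j + k < j.+1 * m by nia.
by rewrite /pair_code -!mulnn; apply: leq_trans (leq_mul le_sum le_sum); nia.
Qed.

Definition unpair (i : nat) : option (nat * nat) :=
  if pselect (exists jk, pair_code jk.1 jk.2 = i) is left ex_jk
  then Some (projT1 (cid ex_jk)) else None.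

Lemma pair_codeK j k : unpair (pair_code j k) = Some (j, k).
Proof.
rewrite /unpair; case: pselect => [ex_jk|]; last by case; exists (j, k).
by case: cid => -[j' k'] /pair_code_inj /= [-> ->].
Qed.

Lemma unpair_Some i jk : unpair i = Some jk -> i = pair_code jk.1 jk.2.
Proof. by rewrite /unpair; case: pselect => // ex_jk [<-]; case: cid. Qed.

Definition trace_length (b : nat -> nat) (n : nat) : nat := n * ((b n).+1 * (b n).+1).

Lemma turing_le_prefix_trace A b :
  computable b -> turing_le (prefix_code A \o trace_length b) A.
Proof.
move=> /(computable_turing_le A)/turing_le_succ b1.
apply: turing_le_comp (turing_le_prefix_code A).
exact: turing_le_mul (turing_le_id A) (turing_le_mul b1 b1).
Qed.

Section TracingCover.

Variables N c q : nat.

Definition cover_level (j : nat) : nat := N + q.+1 * (c + j.+1 ^ 2).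

Definition cover_entry (j k : nat) : option (seq bool) :=
  if unpickle j is Some (pb, pg) then
    let b := fun_of_prog pb in
    let n := cover_level j in
    let L := D (fun_of_prog pg n) in
    if (k < size L) && (k < b n) then Some (bits_of (nth 0 L k) (trace_length b n))
    else None
  else None.

Definition trace_cover (i : nat) : option (seq bool) :=
  if unpair i is Some (j, k) then cover_entry j k else None.

Lemma trace_cover_covers : covers [set X | recursively_traceable X] trace_cover.
Proof.
move=> X [b [[pb pbP] traceX]].
have [g [[pg pgP] gP]] := traceX _ (turing_le_prefix_trace X (ex_intro _ pb pbP)).
set n := cover_level (pickle (pb, pg)).
have [size_le code_in] := gP n.
set k := index (prefix_code X (trace_length b n)) (D (g n)).
exists (pair_code (pickle (pb, pg)) k) => //.
rewrite /trace_cover pair_codeK /cover_entry pickleK.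
rewrite (fun_of_progE pbP) (fun_of_progE pgP).
rewrite -/n index_mem code_in (leq_trans _ size_le) ?index_mem // nth_index //.
exact: cylinder_prefix_code.
Qed.

Lemma size_trace_cover i s :
  trace_cover i = Some s -> N + q.+1 * (c + i.+1) <= size s.
Proof.
rewrite /trace_cover; case E: unpair => [[j k]|] //; rewrite (unpair_Some E) /=.
rewrite /cover_entry; case: unpickle => [[pb pg]|] //=.
set B := fun_of_prog pb (cover_level j); case: ifP => // /andP[_ lt_kB] [<-].
have := pair_code_lt j (leqW lt_kB).
rewrite size_bits_of /trace_length /cover_level -/B -!mulnn; nia.
Qed.

End TracingCover.

Local Open Scope ring_scope.
Local Open Scope classical_set_scope.

Section HausdorffDimension.

Variable R : realType.

Lemma cover_weight_ge0 (t : R) u : (0 <= cover_weight t u)%E.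
Proof. by case: u => //= s; rewrite lee_fin powR_ge0. Qed.

Lemma cover_weight_le (q m : nat) s : (q.+1 * m <= size s)%N ->
  (cover_weight (q.+1%:R^-1) (Some s) <= ((2 : R) ^- m)%:E)%E.
Proof.
move=> le_size; rewrite /cover_weight lee_fin powRN.
rewrite lef_pV2 ?posrE ?exprn_gt0 ?powR_gt0 //.
rewrite -powR_mulrn //; apply: ler_powR; first by rewrite ler1n.
have q1_neq0 : q.+1%:R != 0 :> R by rewrite pnatr_eq0.
rewrite -[m%:R](mulKf q1_neq0) -natrM.
by rewrite ler_wpM2l ?invr_ge0 ?ler0n // ler_nat.
Qed.

Lemma hausdorff_measure_eq0 (t : R) E :
  (forall N c, (hausdorff_approx t N E <= ((2 : R) ^- c)%:E)%E) ->
  hausdorff_measure t E = 0%E.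
Proof.
move=> small; apply/le_anti/andP; split; last first.
  apply: le_trans (ereal_sup_ubound (ex_intro2 _ _ 0%N I erefl)).
  apply: le_ereal_inf_tmp => _ [U _ <-].
  by apply: nneseries_ge0 => i _ _; apply: cover_weight_ge0.
apply: ge_ereal_sup => _ [N _ <-]; apply/lee_addgt0Pr => e e_gt0; rewrite add0e.
set c := Num.Def.archi_bound e^-1.
apply: le_trans (small N c) _; rewrite lee_fin invf_ple ?posrE ?exprn_gt0 //.
exact/ltW/(upper_nthrootP (leqnn c)).
Qed.

Lemma hausdorff_dim_eq0 E :
  (forall q : nat, hausdorff_measure (q.+1%:R^-1 : R) E = 0%E) ->
  hausdorff_dim R E = 0%E.
Proof.
move=> null; apply/le_anti/andP; split; last first.
  by apply: le_ereal_inf_tmp => _ [t [t_ge0 _] <-]; rewrite lee_fin.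
apply/lee_addgt0Pr => e e_gt0; rewrite add0e.
set q := Num.Def.archi_bound e^-1.
apply: (@le_trans _ _ (q.+1%:R^-1)%:E).
  by apply: ereal_inf_lbound; exists (q.+1%:R^-1); rewrite ?invr_ge0 ?ler0n ?null.
rewrite lee_fin invf_ple ?posrE ?ltr0n //; apply/ltW/(lt_le_trans (archi_boundP _)).
  by rewrite invr_ge0 ltW.
by rewrite ler_nat.
Qed.

End HausdorffDimension.

Lemma trace_cover_weight (R : realType) N c q :
  (\sum_(i <oo) cover_weight (q.+1%:R^-1 : R) (trace_cover N c q i)
     <= ((2 : R) ^- c)%:E)%E.
Proof.
apply: le_trans (epsilon_trick0 xpredT _); last by rewrite invr_ge0 exprn_ge0.
apply: lee_nneseries => i _; first by rewrite cover_weight_ge0.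
case E: trace_cover => [s|]; last by rewrite lee_fin divr_ge0 ?invr_ge0 ?exprn_ge0.
have le_size := leq_trans (leq_addl N _) (size_trace_cover E).
by rewrite natrX -invfM -exprD; apply: cover_weight_le.
Qed.

Theorem mainTheorem4 (R : realType) :
  hausdorff_dim R [set X | recursively_traceable X] = 0%E.
Proof.
apply: hausdorff_dim_eq0 => q; apply: hausdorff_measure_eq0 => N c.
apply: le_trans (trace_cover_weight R N c q).
apply: ereal_inf_lbound; exists (trace_cover N c q) => //; split.
  exact: trace_cover_covers.
by move=> i s /size_trace_cover/(leq_trans (leq_addr _ _)).
Qed.
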